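(* Let $T>0$ and $I\geq 1$. Consider the system of renewal equations, for $1\leq i\leq I$, $t\in\mathbb{R}$, $x\geq 0$, $$\partial_t n_i(t,x)+\partial_x n_i(t,x)+d_i(t,x)\,n_i(t,x)=0,\qquad n_i(t,0)=\sum_{j=1}^I\int_0^\infty B_{j\rightarrow i}(t,x)\,n_j(t,x)\,dx,$$ with nonnegative coefficients $d_i$, $B_{j\rightarrow i}$ that are $T$-periodic in $t$. Let $(B^1_{j\rightarrow i},d^1_i)_{1\leq i,j\leq I}$ and $(B^2_{j\rightarrow i},d^2_i)_{1\leq i,j\leq I}$ be two such sets of coefficients, with associated dominant (Floquet) eigenvalues $\lambda_F^1$ and $\lambda_F^2$. For $\theta\in[0,1]$ set $$d_i^\theta=\theta d_i^1+(1-\theta)d_i^2,\qquad B^\theta_{j\rightarrow i}=(B^1_{j\rightarrow i})^\theta(B^2_{j\rightarrow i})^{1-\theta},$$ and let $\lambda_F^\theta$ be the dominant eigenvalue associated with the coefficients $(B^\theta_{j\rightarrow i},d_i^\theta)$. Then for every $\theta\in[0,1]$, $$\lambda_F^\theta\leq \theta\lambda_F^1+(1-\theta)\lambda_F^2.$$ That is, the dominant eigenvalue is convex with respect to the death rates $d_i$ and geometrically convex with respect to the birth rates $B_{j\rightarrow i}$.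
   Context: The dominant (Floquet) eigenvalue $\lambda_F$ of the system is the real number governing the growth of solutions (solutions behave like $e^{\lambda_F t}$ times a bounded term). When positive $T$-periodic eigenelements exist, $\lambda_F$ is the unique real $\lambda$ for which there exist nonnegative, nonzero, $T$-periodic $N_i$ with $\partial_t N_i+\partial_x N_i+(d_i+\lambda)N_i=0$, $N_i(t,0)=\sum_j\int_0^\infty B_{j\rightarrow i}N_j\,dx$, together with positive $T$-periodic dual eigenfunctions $\phi_j$ satisfying $-\partial_t\phi_j-\partial_x\phi_j+(d_j+\lambda)\phi_j=\sum_i B_{j\rightarrow i}(t,x)\phi_i(t,0)$. In general (Collatz–Wielandt type definition), $\lambda_F$ is the infimum of the reals $\mu$ for which there exist positive functions $\phi_{\mu,j}$, $T$-periodic in $t$, with $-\partial_t\phi_{\mu,j}(t,x)-\partial_x\phi_{\mu,j}(t,x)+[d_j(t,x)+\mu]\phi_{\mu,j}(t,x)\geq\sum_i B_{j\rightarrow i}(t,x)\phi_{\mu,i}(t,0)$; the two definitions coincide when eigenelements exist. *)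

From HB Require Import structures.
From mathcomp Require Import all_boot all_order all_algebra.
From mathcomp Require Import all_classical all_reals all_analysis.
Set Implicit Arguments. Unset Strict Implicit. Unset Printing Implicit Defensive.
Import Order.TTheory GRing.Theory Num.Theory.
Local Open Scope classical_set_scope.
Local Open Scope ring_scope.

(* Coefficients of the system with I equations:
   B j i t x = B_{j -> i}(t,x),  d i t x = d_i(t,x);  t in R, x >= 0. *)

Definition admissible_coeffs (R : realType) (I : nat) (T : R)
  (B : 'I_I -> 'I_I -> R -> R -> R) (d : 'I_I -> R -> R -> R) : Prop :=
  (forall j i t x, 0 <= x -> 0 <= B j i t x) /\
  (forall i t x, 0 <= x -> 0 <= d i t x) /\
  (forall j i t x, 0 <= x -> B j i (t + T) x = B j i t x) /\
  (forall i t x, 0 <= x -> d i (t + T) x = d i t x).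

(* Transport derivative (d_t + d_x) phi (t,x), i.e. the derivative of
   phi along the characteristic direction (1,1). *)
Definition transport_deriv (R : realType) (phi : R -> R -> R) (t x : R) : R :=
  derive1 (fun h : R => phi (t + h) (x + h)) 0.

Definition transport_derivable (R : realType) (phi : R -> R -> R) (t x : R) : Prop :=
  derivable (fun h : R => phi (t + h) (x + h)) 0 1.

Definition dual_supersolution (R : realType) (I : nat) (T : R)
  (B : 'I_I -> 'I_I -> R -> R -> R) (d : 'I_I -> R -> R -> R)
  (mu : R) (phi : 'I_I -> R -> R -> R) : Prop :=
  (forall j t x, 0 <= x -> 0 < phi j t x) /\
  (forall j t x, 0 <= x -> phi j (t + T) x = phi j t x) /\
  (forall j t x, 0 <= x -> transport_derivable (phi j) t x) /\
  (forall j t x, 0 <= x ->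
     \sum_(i < I) B j i t x * phi i t 0
       <= - transport_deriv (phi j) t x + (d j t x + mu) * phi j t x).

(* Dominant (Floquet) eigenvalue, Collatz--Wielandt definition, as an
   extended real (inf of the empty set is +oo). *)
Definition lambdaF (R : realType) (I : nat) (T : R)
  (B : 'I_I -> 'I_I -> R -> R -> R) (d : 'I_I -> R -> R -> R) : \bar R :=
  ereal_inf [set mu%:E | mu in [set mu : R | exists phi, dual_supersolution T B d mu phi]].

Definition B_theta (R : realType) (I : nat) (theta : R)
  (B1 B2 : 'I_I -> 'I_I -> R -> R -> R) : 'I_I -> 'I_I -> R -> R -> R :=
  fun j i t x => (B1 j i t x) `^ theta * (B2 j i t x) `^ (1 - theta).

Definition d_theta (R : realType) (I : nat) (theta : R)
  (d1 d2 : 'I_I -> R -> R -> R) : 'I_I -> R -> R -> R :=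
  fun i t x => theta * d1 i t x + (1 - theta) * d2 i t x.

From HB Require Import structures.
From mathcomp Require Import all_boot all_order all_algebra.
From mathcomp Require Import all_classical all_reals all_analysis.
From mathcomp Require Import ring.
Import Order.TTheory GRing.Theory Num.Theory.
Set Implicit Arguments. Unset Strict Implicit. Unset Printing Implicit Defensive.
Local Open Scope classical_set_scope.
Local Open Scope ring_scope.

(* If [phi1] and [phi2] are dual supersolutions for the coefficients [(B1, d1)]
   and [(B2, d2)] with parameters [mu1] and [mu2], their geometric interpolation
   [phi1^th phi2^(1-th)] is a dual supersolution for the interpolated
   coefficients with parameter [th mu1 + (1-th) mu2]: the logarithmic transport
   derivative of [phi] is the convex combination of those of [phi1] and [phi2],
   and the birth term is controlled by the weighted AM-GM inequality.  Taking
   [mu1], [mu2] arbitrarily close to [lambdaF] gives the theorem. *)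

Definition geomean {R : realType} (th p q : R) : R :=
  expR (th * ln p + (1 - th) * ln q).

Section GeometricInterpolation.
Variables (R : realType) (th : R).

Lemma geomeanE (p q : R) : 0 < p -> 0 < q ->
  geomean th p q = p `^ th * q `^ (1 - th).
Proof. by move=> p0 q0; rewrite /geomean /powR !gt_eqF // expRD. Qed.

Lemma is_derive_geomean (g1 g2 : R -> R) (x dg1 dg2 : R) :
  is_derive x 1 g1 dg1 -> is_derive x 1 g2 dg2 -> 0 < g1 x -> 0 < g2 x ->
  is_derive x 1 (fun h => geomean th (g1 h) (g2 h))
    (geomean th (g1 x) (g2 x) * (th * (dg1 / g1 x) + (1 - th) * (dg2 / g2 x))).
Proof.
move=> G1 G2 g1x g2x.
have L1 : is_derive x 1 (@ln R \o g1) ((g1 x)^-1 * dg1).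
  exact: is_derive1_comp (is_derive1_ln g1x) G1.
have L2 : is_derive x 1 (@ln R \o g2) ((g2 x)^-1 * dg2).
  exact: is_derive1_comp (is_derive1_ln g2x) G2.
have E := is_derive1_comp (is_derive_expR _)
  (is_deriveD (is_deriveZ th L1) (is_deriveZ (1 - th) L2)).
by rewrite !(mulrC _^-1) in E.
Qed.

Lemma transport_deriv_geomean (phi1 phi2 : R -> R -> R) (t x : R) :
  transport_derivable phi1 t x -> transport_derivable phi2 t x ->
  0 < phi1 t x -> 0 < phi2 t x ->
  let phi t x := geomean th (phi1 t x) (phi2 t x) in
  transport_derivable phi t x /\
  transport_deriv phi t x = phi t x *
    (th * (transport_deriv phi1 t x / phi1 t x)
     + (1 - th) * (transport_deriv phi2 t x / phi2 t x)).
Proof.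
move=> D1 D2 p1 p2 phi.
have G1 := derivableP D1; have G2 := derivableP D2.
rewrite -!derive1E in G1 G2.
have := is_derive_geomean G1 G2; rewrite /= !addr0 => /(_ p1 p2) E.
split; first exact: (@ex_derive _ _ _ _ _ _ _ E).
by rewrite /transport_deriv derive1E (@derive_val _ _ _ _ _ _ _ E).
Qed.

Hypothesis th01 : 0 <= th <= 1.

Lemma powR_geomean_le (u v : R) : 0 <= u -> 0 <= v ->
  u `^ th * v `^ (1 - th) <= th * u + (1 - th) * v.
Proof.
move: th01 => /andP[th0 th1] u0 v0.
have [->|thn0] := eqVneq th 0.
  by rewrite subr0 powRr0 powRr1 // !mul1r mul0r add0r.
have [->|thn1] := eqVneq th 1.
  by rewrite subrr powRr0 powRr1 // mulr1 mul0r addr0 mul1r.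
have thp : 0 < th by rewrite lt_neqAle eq_sym thn0.
have thq : 0 < 1 - th by rewrite subr_gt0 lt_neqAle thn1.
(* Young's inequality with the conjugate exponents [1/th] and [1/(1-th)]. *)
have := @conjugate_powR R (u `^ th) (v `^ (1 - th)) th^-1 (1 - th)^-1
  (powR_ge0 _ _) (powR_ge0 _ _).
rewrite !invr_gt0 => /(_ thp thq).
rewrite !invrK addrC subrK => /(_ erefl).
by rewrite -!powRrM !mulfV ?gt_eqF // !powRr1 // (mulrC u) (mulrC v).
Qed.

Lemma powR_geomean_le_scaled (a b p q : R) : 0 <= a -> 0 <= b -> 0 < p -> 0 < q ->
  a `^ th * b `^ (1 - th) <=
  p `^ th * q `^ (1 - th) * (th * (a / p) + (1 - th) * (b / q)).
Proof.
move=> a0 b0 p0 q0.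
rewrite -{1}(divfK (lt0r_neq0 p0) a) -{1}(divfK (lt0r_neq0 q0) b).
have ap : 0 <= a / p by rewrite divr_ge0 // ltW.
have bq : 0 <= b / q by rewrite divr_ge0 // ltW.
rewrite (powRM _ ap (ltW p0)) (powRM _ bq (ltW q0)) mulrACA mulrC.
apply: ler_wpM2l; first by rewrite mulr_ge0 ?powR_ge0.
exact: powR_geomean_le.
Qed.

Lemma sum_geomean_le (J : finType) (a b : J -> R) (p q D1 D2 d1 d2 mu1 mu2 : R) :
  (forall i, 0 <= a i) -> (forall i, 0 <= b i) -> 0 < p -> 0 < q ->
  \sum_i a i <= - D1 + (d1 + mu1) * p ->
  \sum_i b i <= - D2 + (d2 + mu2) * q ->
  \sum_i a i `^ th * b i `^ (1 - th) <=
   - (p `^ th * q `^ (1 - th) * (th * (D1 / p) + (1 - th) * (D2 / q)))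
   + ((th * d1 + (1 - th) * d2) + (th * mu1 + (1 - th) * mu2))
     * (p `^ th * q `^ (1 - th)).
Proof.
move: th01 => /andP[th0 th1] a0 b0 p0 q0 Sa Sb.
set P := p `^ th * q `^ (1 - th).
have P0 : 0 <= P by rewrite mulr_ge0 ?powR_ge0.
apply: (@le_trans _ _ (\sum_i P * (th * (a i / p) + (1 - th) * (b i / q)))).
  by apply: ler_sum => i _; apply: powR_geomean_le_scaled.
have -> : - (P * (th * (D1 / p) + (1 - th) * (D2 / q)))
    + (th * d1 + (1 - th) * d2 + (th * mu1 + (1 - th) * mu2)) * P =
  P * (th * ((- D1 + (d1 + mu1) * p) / p) + (1 - th) * ((- D2 + (d2 + mu2) * q) / q)).
  by field; rewrite ?gt_eqF.
rewrite -mulr_sumr big_split /= -!mulr_sumr -!mulr_suml.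
apply: ler_wpM2l => //; apply: lerD; apply: ler_wpM2l; rewrite ?subr_ge0 //.
  by rewrite ler_pM2r ?invr_gt0.
by rewrite ler_pM2r ?invr_gt0.
Qed.

Lemma dual_supersolution_geomean (I : nat) (T : R)
  (B1 B2 : 'I_I -> 'I_I -> R -> R -> R) (d1 d2 : 'I_I -> R -> R -> R)
  (mu1 mu2 : R) (phi1 phi2 : 'I_I -> R -> R -> R) :
  (forall j i t x, 0 <= x -> 0 <= B1 j i t x) ->
  (forall j i t x, 0 <= x -> 0 <= B2 j i t x) ->
  dual_supersolution T B1 d1 mu1 phi1 -> dual_supersolution T B2 d2 mu2 phi2 ->
  dual_supersolution T (B_theta th B1 B2) (d_theta th d1 d2)
    (th * mu1 + (1 - th) * mu2) (fun j t x => geomean th (phi1 j t x) (phi2 j t x)).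
Proof.
move=> B1p B2p [pos1 [per1 [der1 ineq1]]] [pos2 [per2 [der2 ineq2]]].
have D j t x (x0 : 0 <= x) := transport_deriv_geomean (der1 j t x x0)
  (der2 j t x x0) (pos1 j t x x0) (pos2 j t x x0).
split; first by move=> j t x _; exact: expR_gt0.
split; first by move=> j t x x0; rewrite per1 // per2.
split; first by move=> j t x x0; case: (D j t x x0).
move=> j t x x0; rewrite (D j t x x0).2 geomeanE ?pos1 ?pos2 //.
have -> : \sum_i B_theta th B1 B2 j i t x * geomean th (phi1 i t 0) (phi2 i t 0) =
  \sum_i (B1 j i t x * phi1 i t 0) `^ th * (B2 j i t x * phi2 i t 0) `^ (1 - th).
  apply: eq_bigr => i _.
  have p1 := ltW (pos1 i t 0 (lexx 0)); have p2 := ltW (pos2 i t 0 (lexx 0)).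
  rewrite /B_theta geomeanE ?pos1 ?pos2 //.
  by rewrite (powRM _ (B1p j i t x x0) p1) (powRM _ (B2p j i t x x0) p2) mulrACA.
rewrite /d_theta; apply: sum_geomean_le; rewrite ?pos1 ?pos2 ?ineq1 ?ineq2 //.
- by move=> i; rewrite mulr_ge0 ?B1p // ltW // pos1.
- by move=> i; rewrite mulr_ge0 ?B2p // ltW // pos2.
Qed.

End GeometricInterpolation.

Section CollatzWielandt.
Variables (R : realType) (I : nat) (T : R).
Variables (B : 'I_I -> 'I_I -> R -> R -> R) (d : 'I_I -> R -> R -> R).

Lemma lambdaF_le_supersolution (mu : R) (phi : 'I_I -> R -> R -> R) :
  dual_supersolution T B d mu phi -> (lambdaF T B d <= mu%:E)%E.
Proof. by move=> S; apply: ereal_inf_lbound; exists mu => //; exists phi. Qed.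

Lemma lambdaF_approx (lam e : R) : lambdaF T B d = lam%:E -> 0 < e ->
  exists mu phi, dual_supersolution T B d mu phi /\ mu < lam + e.
Proof.
move=> hlam e0.
have fin : lambdaF T B d \is a fin_num by rewrite hlam.
have [_ [mu [phi S] <-] lt] := lb_ereal_inf_adherent e0 fin.
by exists mu, phi; split; rewrite // -lte_fin EFinD -hlam.
Qed.

End CollatzWielandt.

Theorem theorem1 (R : realType) (I : nat) (T : R)
  (B1 B2 : 'I_I -> 'I_I -> R -> R -> R) (d1 d2 : 'I_I -> R -> R -> R)
  (lam1 lam2 : R) :
  0 < T -> (1 <= I)%N ->
  admissible_coeffs T B1 d1 -> admissible_coeffs T B2 d2 ->
  lambdaF T B1 d1 = lam1%:E -> lambdaF T B2 d2 = lam2%:E ->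
  forall theta : R, 0 <= theta <= 1 ->
  (lambdaF T (B_theta theta B1 B2) (d_theta theta d1 d2)
     <= (theta * lam1 + (1 - theta) * lam2)%:E)%E.
Proof.
move=> _ _ [B1p _] [B2p _] h1 h2 th th01.
apply/lee_addgt0Pr => e e0.
have [mu1 [phi1 [S1 lt1]]] := lambdaF_approx h1 e0.
have [mu2 [phi2 [S2 lt2]]] := lambdaF_approx h2 e0.
have S := dual_supersolution_geomean th01 B1p B2p S1 S2.
apply: (le_trans (lambdaF_le_supersolution S)).
rewrite -EFinD lee_fin; move: th01 => /andP[th0 th1].
have -> : th * lam1 + (1 - th) * lam2 + e =
  th * (lam1 + e) + (1 - th) * (lam2 + e) by ring.
by rewrite lerD // ler_wpM2l ?subr_ge0 // ltW.
Qed.
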